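(* Let $(\star)$ be a linear system over $\mathbb{F}_q$ ($q$ a prime power) with coefficient matrix $A\in\mathbb{F}_q^{m\times k}$, let $t$ be a positive integer, let $\{(x^{(i)}_1,\dots,x^{(i)}_k)\}_{i=1}^L$ be a list of pairwise disjoint solutions of $(\star)$ in $(\mathbb{F}_q^n)^k$, and let $j_1\ne j_2$ be indices in the same column equivalence class. If $L\ge4t(\Gamma_q)^n$, then there exist $i\in[L]$ and $t$ distinct pairs $(i'_s,i''_s)\in([L]\setminus\{i\})^2$, $s\in[t]$, such that for every $s\in[t]$ the tuple $(y^{(s)}_1,\dots,y^{(s)}_k)$ given by $y^{(s)}_j=x^{(i)}_j$ for $j\ne j_1,j_2$, $y^{(s)}_{j_1}=x^{(i'_s)}_{j_1}$, $y^{(s)}_{j_2}=x^{(i''_s)}_{j_2}$ is a solution of $(\star)$.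
   Context: Solutions are tuples in $(\mathbb{F}_q^n)^k$ with $\sum_ja_{ij}x_j=0$ for all $i$. Two solutions $(x_j)$, $(y_j)$ are disjoint if $\{x_1,\dots,x_k\}\cap\{y_1,\dots,y_k\}=\varnothing$. Indices $j,j'$ are in the same column equivalence class if columns $j,j'$ of $A$ are nonzero scalar multiples of one another. $\Gamma_q:=q\,J(q)$ where $J(t)=\frac1t\min_{0<x<1}\frac{1+x+\cdots+x^{t-1}}{x^{(t-1)/3}}$. *)

From HB Require Import structures.
From mathcomp Require Import all_boot all_order all_algebra.
From mathcomp Require Import all_classical all_reals all_analysis.
Set Implicit Arguments. Unset Strict Implicit. Unset Printing Implicit Defensive.
Import Order.TTheory GRing.Theory Num.Theory.
Local Open Scope ring_scope.
Local Open Scope classical_set_scope.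

(* x : 'I_k -> 'rV[F]_n is a tuple (x_1,...,x_k) in (F^n)^k; it solves the
   system with coefficient matrix A if sum_j a_ij x_j = 0 for every row i. *)
Definition is_solution (F : fieldType) (m k n : nat) (A : 'M[F]_(m, k))
  (x : 'I_k -> 'rV[F]_n) : Prop :=
  forall r : 'I_m, \sum_(j < k) A r j *: x j = 0.

Definition disjoint_sol (F : fieldType) (k n : nat) (x y : 'I_k -> 'rV[F]_n) : Prop :=
  forall j j' : 'I_k, x j != y j'.

Definition same_col_class (F : fieldType) (m k : nat) (A : 'M[F]_(m, k))
  (j j' : 'I_k) : Prop :=
  exists c : F, c != 0 /\ col j A = c *: col j' A.

(* J(t) = (1/t) min_{0<x<1} (1 + x + ... + x^(t-1)) / x^((t-1)/3);
   the minimum is attained, so we take the infimum. *)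
Definition Jfun (R : realType) (t : nat) : R :=
  t%:R^-1 * inf [set (\sum_(l < t) x ^+ l) / powR x ((t.-1)%:R / 3) | x in `]0, 1[].

Definition Gamma (R : realType) (q : nat) : R := q%:R * Jfun R q.

(* Write col j1 = c * col j2.  Swapping x_(i') j1 and x_(i'') j2 into the solution
   x_i gives a solution as soon as c x_(i') j1 + x_(i'') j2 = c x_i j1 + x_i j2.
   If every i had fewer than t such pairs, the relation "i' occurs as a first
   coordinate for i" would have out-degree < t, so a greedy choice gives an
   independent set I with L <= (2t - 1) |I|.  On I the triples
   (c x_a j1, x_a j2, c x_a j1 + x_a j2) form a tricolored sum-free set in F_q^n
   (disjointness of the solutions excludes the degenerate coincidences), so by
   the slice-rank method |I| is at most 3 times the number of exponent vectors
   in {0..q-1}^n of degree <= (q-1)n/3.  A Chernoff-type estimate bounds that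
   number by Gamma_q^n, and the tensor-power trick removes the factor 3.  Hence
   L <= (2t - 1) Gamma_q^n < 4t Gamma_q^n. *)

From HB Require Import structures.
From mathcomp Require Import all_boot all_order all_algebra all_field.
From mathcomp Require Import ring zify.
Import Order.TTheory GRing.Theory Num.Theory.
Local Open Scope ring_scope.
Set Implicit Arguments. Unset Strict Implicit. Unset Printing Implicit Defensive.

(** * Independent sets in digraphs of bounded out-degree *)

Lemma card_set_in_pred (V : finType) (W : {set V}) (p : pred V) :
  #|[set a in W | p a]| = (\sum_(a in W) p a)%N.
Proof.
rewrite -sum1_card (eq_bigl (fun a => (a \in W) && p a)) => [|a]; last by rewrite inE.
by rewrite big_mkcondr; apply: eq_bigr => a _; case: (p a).
Qed.

Section IndependentSubset.

Variables (V : finType) (N : V -> {set V}) (d : nat).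
Hypothesis N_le : forall c, (#|N c| <= d)%N.
Hypothesis N_irr : forall c, c \notin N c.

Definition neighbours_in (W : {set V}) (v : V) : {set V} :=
  (N v :&: W) :|: [set a in W | v \in N a].

Lemma exists_small_neighbourhood (W : {set V}) : W != set0 ->
  exists2 v, v \in W & (#|neighbours_in W v| <= 2 * d)%N.
Proof.
case/set0Pn => v0 v0W.
have sum_le : (\sum_(v in W) #|neighbours_in W v| <= 2 * d * #|W|)%N.
  apply: (@leq_trans (\sum_(v in W) (#|N v :&: W| + #|[set a in W | v \in N a]|))).
    by apply: leq_sum => v _; apply: leq_card_setU.
  rewrite big_split /=.
  have -> : (\sum_(v in W) #|[set a in W | v \in N a]| =
             \sum_(a in W) #|N a :&: W|)%N.
    under eq_bigr => v _ do rewrite card_set_in_pred.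
    rewrite exchange_big /=; apply: eq_bigr => a _.
    by rewrite setIC card_set_in_pred.
  have : (\sum_(v in W) #|N v :&: W| <= d * #|W|)%N.
    rewrite mulnC -sum_nat_const; apply: leq_sum => v _.
    exact: leq_trans (subset_leq_card (subsetIl _ _)) (N_le v).
  lia.
apply/exists_inP; apply: contraTT sum_le => /exists_inPn big_nbhd.
rewrite -ltnNge; apply: leq_trans (_ : \sum_(v in W) (2 * d).+1 <= _)%N.
  rewrite sum_nat_const mulnC ltn_mul2l /=.
  by apply/andP; split; [apply/card_gt0P; exists v0 |].
by apply: leq_sum => v vW; rewrite ltnNge big_nbhd.
Qed.

(* Greedy choice: pick a vertex with few neighbours in W, discard it together
   with its neighbours, and recurse. *)
Lemma independent_subset (W : {set V}) : exists I : {set V},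
  [/\ I \subset W, (#|W| <= (2 * d + 1) * #|I|)%N &
      forall a c, a \in I -> c \in I -> a \notin N c].
Proof.
move: {2}#|W| (leqnn #|W|) => n; elim: n W => [|n IH] W.
  rewrite leqn0 cards_eq0 => /eqP ->.
  by exists set0; rewrite sub0set cards0; split => // a c; rewrite inE.
move=> Wn; have [->|W0] := eqVneq W set0.
  by exists set0; rewrite sub0set cards0; split => // a c; rewrite inE.
have [v vW v_nbhd] := exists_small_neighbourhood W0.
pose R := v |: neighbours_in W v.
have RW : (#|W :&: R| <= (2 * d).+1)%N.
  apply: leq_trans (subset_leq_card (subsetIr _ _)) _.
  by rewrite cardsU1; move: v_nbhd; case: (_ \notin _) => /=; lia.
have vWR : (0 < #|W :&: R|)%N by apply/card_gt0P; exists v; rewrite !inE eqxx vW.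
have [I [sIW card_I indI]] := IH (W :\: R) ltac:(have := cardsID R W; lia).
have vI : v \notin I by apply/negP => /(subsetP sIW); rewrite !inE eqxx.
exists (v |: I); split.
- by rewrite subUset sub1set vW (subset_trans sIW) // subsetDl.
- by rewrite cardsU1 vI; have := cardsID R W; lia.
- have far x : x \in I -> x \notin N v /\ v \notin N x.
    move/(subsetP sIW); rewrite !inE => /andP [xR xW].
    by split; apply: contra xR => xN; rewrite xN xW !orbT.
  move=> a c; rewrite !inE => /predU1P [-> | aI] /predU1P [-> | cI].
  + exact: N_irr.
  + by case: (far c cI).
  + by case: (far a aI).
  + exact: indI.
Qed.

End IndependentSubset.

(** * Slice rank *)

Lemma mxrank_sum_le_card (F : fieldType) (I : finType) (P : pred I) m n
    (M : I -> 'M[F]_(m, n)) :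
  (forall i, P i -> \rank (M i) <= 1)%N -> (\rank (\sum_(i | P i) M i)%R <= #|P|)%N.
Proof.
move=> rankM1; rewrite -sum1_card.
elim/big_ind2: _ => //; first by rewrite mxrank0.
by move=> A a B b Aa Bb; apply: leq_trans (mxrank_add _ _) (leq_add Aa Bb).
Qed.

Lemma mxrank_col_mul_row (F : fieldType) m n (c : 'cV[F]_m) (r : 'rV[F]_n) :
  (\rank (c *m r) <= 1)%N.
Proof. exact: leq_trans (mxrankM_maxl _ _) (rank_leq_col _). Qed.

Lemma row_free_combination_ones (F : fieldType) d N (B : 'M[F]_(d, N)) :
  row_free B -> exists (z : 'rV_d) (f : 'I_d -> 'I_N),
    injective f /\ forall i, (z *m B) 0 (f i) = 1.
Proof.
move=> freeB.
have fullBT : row_full B^T by rewrite /row_full mxrank_tr.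
pose f := fullrankfun fullBT.
have unit_Bf : colsub f B \in unitmx.
  rewrite -unitmx_tr -row_full_unit /row_full.
  have -> : (colsub f B)^T = rowsub f B^T by apply/matrixP => i j; rewrite !mxE.
  by rewrite mxrank_fullrowsub.
pose z : 'rV[F]_d := const_mx 1 *m invmx (colsub f B).
exists z, f; split; first exact: fullrankfun_inj.
move=> i; have : colsub f (z *m B) = const_mx 1.
  by rewrite -mulmx_colsub mulmxKV.
by move/matrixP => /(_ 0 i); rewrite !mxE.
Qed.

Lemma kernel_vector_ones (F : fieldType) N M (Phi : 'M[F]_(N, M)) :
  exists r (f : 'I_r -> 'I_N) (h : 'rV_N),
    [/\ (N - \rank Phi <= r)%N, injective f, h *m Phi = 0 & forall i, h 0 (f i) = 1].
Proof.
have [z [f [f_inj hf]]] := row_free_combination_ones (row_base_free (kermx Phi)).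
exists (\rank (kermx Phi)), f, (z *m row_base (kermx Phi)); split => //.
  by rewrite mxrank_ker.
have /submxP [D ->] : (row_base (kermx Phi) <= kermx Phi)%MS by rewrite eq_row_base.
by rewrite -mulmxA -mulmxA mulmx_ker !mulmx0.
Qed.

Lemma mxrank_ge_diag_mxsub (F : fieldType) m n (M : 'M[F]_(m, n)) r
    (f : 'I_r -> 'I_m) (g : 'I_r -> 'I_n) (d : 'rV[F]_r) :
  mxsub f g M = diag_mx d -> (forall i, d 0 i != 0) -> (r <= \rank M)%N.
Proof.
move=> Msub d_neq0.
have -> : r = \rank (mxsub f g M).
  apply/esym/mxrank_unit; rewrite Msub unitmxE det_diag unitfE.
  exact/prodf_neq0.
rewrite -{1}[M]mul1mx mxsub_mul; apply: leq_trans (mxrankM_maxr _ _) _.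
rewrite -[M in colsub _ M]mulmx1 -mulmx_colsub; exact: mxrankM_maxl.
Qed.

Lemma mxrank_sum_outer_le (F : fieldType) (I : finType) (P : pred I) m n
    (p : I -> 'I_m -> F) (q : I -> 'I_n -> F) :
  (\rank (\matrix_(a, b) \sum_(i | P i) p i a * q i b)%R <= #|P|)%N.
Proof.
have -> : \matrix_(a, b) \sum_(i | P i) p i a * q i b =
          (\sum_(i | P i) (\col_a p i a) *m (\row_b q i b))%R.
  apply/matrixP => a b; rewrite !mxE summxE.
  by apply: eq_bigr => i _; rewrite !mxE big_ord1 !mxE.
by apply: mxrank_sum_le_card => i _; apply: mxrank_col_mul_row.
Qed.

(* Tao's slice-rank argument: contracting the third slot against a vector h
   orthogonal to all the f3-slices leaves a matrix of rank at most 2|P| which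
   is diagonal, with nonzero diagonal, on the support of h. *)
Lemma card_le_slice_rank (F : fieldType) (Ix I : finType) (S : {set Ix}) (P : pred I)
    (T : Ix -> Ix -> Ix -> F) (f1 f2 f3 : I -> Ix -> F) (g1 g2 g3 : I -> Ix -> Ix -> F) :
  (forall a, a \in S -> T a a a != 0) ->
  (forall a b c, a \in S -> b \in S -> c \in S -> T a b c != 0 -> a = c /\ b = c) ->
  (forall a b c, a \in S -> b \in S -> c \in S -> T a b c =
     \sum_(i | P i) f1 i a * g1 i b c + \sum_(i | P i) f2 i b * g2 i a c
     + \sum_(i | P i) f3 i c * g3 i a b) ->
  (#|S| <= 3 * #|P|)%N.
Proof.
move=> Tdiag Toff Tdec.
pose e (i : 'I_#|S|) : Ix := enum_val i.
have eS i : e i \in S := enum_valP i.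
pose Phi := \matrix_(c, j) \sum_(i | P i) f3 i (e c) * (j == enum_rank i)%:R.
have [r [f [h [r_ge f_inj hPhi hf]]]] := kernel_vector_ones Phi.
have h_orth i : P i -> \sum_c f3 i (e c) * h 0 c = 0.
  move=> Pi; apply: etrans (_ : _ = (h *m Phi) 0 (enum_rank i)) _; last by rewrite hPhi mxE.
  rewrite mxE; apply: eq_bigr => c _; rewrite mxE (bigD1 i) // eqxx mulr1 big1 => [|i' /andP [_ ne_i']].
    by rewrite /= addr0 mulrC.
  by rewrite (inj_eq enum_rank_inj) eq_sym (negbTE ne_i') mulr0.
pose Mx : 'M[F]_#|S| := \matrix_(a, b) \sum_c T (e a) (e b) (e c) * h 0 c.
have Mx_split : Mx =
    (\matrix_(a, b) \sum_(i | P i) f1 i (e a) * (\sum_c g1 i (e b) (e c) * h 0 c)) +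
    (\matrix_(a, b) \sum_(i | P i) (\sum_c g2 i (e a) (e c) * h 0 c) * f2 i (e b)).
  apply/matrixP => a b; rewrite !mxE.
  under eq_bigr => c _ do rewrite Tdec // !mulrDl !mulr_suml.
  rewrite !big_split /=.
  rewrite [X in _ + X = _]exchange_big /= [X in _ + X = _]big1 ?addr0 => [|i Pi].
    congr (_ + _); rewrite exchange_big; apply: eq_bigr => i _ /=.
      by rewrite mulr_sumr; apply: eq_bigr => c _; rewrite mulrA.
    by rewrite mulr_suml; apply: eq_bigr => c _; ring.
  transitivity (g3 i (e a) (e b) * \sum_c f3 i (e c) * h 0 c); last by rewrite h_orth ?mulr0.
  by rewrite mulr_sumr; apply: eq_bigr => c _; ring.
have rank_Mx : (\rank Mx <= #|P| + #|P|)%N.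
  by rewrite Mx_split (leq_trans (mxrank_add _ _)) // leq_add // mxrank_sum_outer_le.
have : (r <= \rank Mx)%N.
  apply: (@mxrank_ge_diag_mxsub _ _ _ _ _ f f (\row_i T (e (f i)) (e (f i)) (e (f i)))).
    apply/matrixP => i j; rewrite !mxE (bigD1 (f i)) //= big1 ?addr0 => [|c ne_c].
      rewrite hf mulr1; have [->|ne_ij] := eqVneq i j; first by rewrite mulr1n.
      rewrite mulr0n; apply: contraNeq ne_ij => /(Toff _ _ _ (eS _) (eS _) (eS _)).
      by case=> _ /enum_val_inj /f_inj ->.
    apply/eqP; rewrite mulf_eq0; apply/orP; left; apply: contraNT ne_c.
    by case/(Toff _ _ _ (eS _) (eS _) (eS _)) => /enum_val_inj ->.
  by move=> i; rewrite mxE Tdiag.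
have := mxrank_sum_outer_le P (fun i c => f3 i (e c)) (fun i j => (j == enum_rank i)%:R).
rewrite -/Phi; lia.
Qed.

(** * Tricolored sum-free sets *)

Record monomial3 (F : Type) := Monomial3 { mcoef : F; xdeg : nat; ydeg : nat; zdeg : nat }.

Definition meval (F : comNzRingType) (p : monomial3 F) (x y z : F) : F :=
  mcoef p * x ^+ xdeg p * y ^+ ydeg p * z ^+ zdeg p.

Definition mdeg (F : Type) (p : monomial3 F) : nat := (xdeg p + ydeg p + zdeg p)%N.

Lemma expr_add_sub_monomials (F : comNzRingType) (d : nat) :
  exists l : seq (monomial3 F), all (fun p => mdeg p <= d)%N l /\
    forall x y z : F, (x + y - z) ^+ d = \sum_(p <- l) meval p x y z.
Proof.
elim: d => [|d [l [deg_l l_eval]]].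
  by exists [:: Monomial3 1 0 0 0]; split=> // x y z; rewrite big_seq1 /meval /= !mulr1.
exists ([seq Monomial3 (mcoef p) (xdeg p).+1 (ydeg p) (zdeg p) | p <- l]
     ++ [seq Monomial3 (mcoef p) (xdeg p) (ydeg p).+1 (zdeg p) | p <- l]
     ++ [seq Monomial3 (- mcoef p) (xdeg p) (ydeg p) (zdeg p).+1 | p <- l]); split.
  by rewrite !all_cat !all_map; apply/and3P; split;
    apply: sub_all deg_l => p; rewrite /mdeg /=; lia.
move=> x y z; rewrite exprSr l_eval !big_cat !big_map /=.
rewrite !mulrDr mulrN !mulr_suml -sumrN addrA.
by congr (_ + _ + _); apply: eq_bigr => p _; rewrite /meval /= !exprS; ring.
Qed.

Lemma one_sub_expr_monomials (F : comNzRingType) (d : nat) :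
  exists l : seq (monomial3 F), all (fun p => mdeg p <= d)%N l /\
    forall x y z : F, 1 - (x + y - z) ^+ d = \sum_(p <- l) meval p x y z.
Proof.
have [l [deg_l l_eval]] := expr_add_sub_monomials F d.
exists (Monomial3 1 0 0 0 :: [seq Monomial3 (- mcoef p) (xdeg p) (ydeg p) (zdeg p) | p <- l]).
split; first by rewrite /= all_map.
move=> x y z; rewrite big_cons big_map l_eval -sumrN /meval /= !mulr1.
by congr (_ + _); apply: eq_bigr => p _; ring.
Qed.

Definition exponent_deg (D : finType) (Q : nat) (al : {ffun D -> 'I_Q.+1}) : nat :=
  (\sum_r (al r : nat))%N.

Definition monom (F : comNzRingType) (D : finType) (Q : nat) (al : {ffun D -> 'I_Q.+1})
    (x : D -> F) : F :=
  \prod_r x r ^+ al r.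

Lemma prod_one_sub_expr_expansion (F : comNzRingType) (D : finType) (Q : nat) :
  exists (s : nat) (cf : {ffun D -> 'I_s} -> F)
         (al be ga : {ffun D -> 'I_s} -> {ffun D -> 'I_Q.+1}),
  (forall ph, exponent_deg (al ph) + exponent_deg (be ph) + exponent_deg (ga ph)
                <= Q * #|D|)%N /\
  forall x y z : D -> F, \prod_r (1 - (x r + y r - z r) ^+ Q) =
    \sum_ph cf ph * monom (al ph) x * monom (be ph) y * monom (ga ph) z.
Proof.
have [l [deg_l l_eval]] := one_sub_expr_monomials F Q.
pose p0 := Monomial3 (0 : F) 0 0 0.
pose nm (i : 'I_(size l)) := nth p0 l i.
have deg_nm i : (mdeg (nm i) <= Q)%N := all_nthP p0 deg_l i (ltn_ord i).
have [xdeg_nm ydeg_nm zdeg_nm] : [/\ forall i, (xdeg (nm i) < Q.+1)%N,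
    forall i, (ydeg (nm i) < Q.+1)%N & forall i, (zdeg (nm i) < Q.+1)%N].
  by split=> i; have := deg_nm i; rewrite /mdeg; lia.
exists (size l), (fun ph => \prod_r mcoef (nm (ph r))),
  (fun ph => [ffun r => Ordinal (xdeg_nm (ph r))]),
  (fun ph => [ffun r => Ordinal (ydeg_nm (ph r))]),
  (fun ph => [ffun r => Ordinal (zdeg_nm (ph r))]); split.
  move=> ph; rewrite /exponent_deg -!big_split /= -[#|D|]sum1_card big_distrr /=.
  by apply: leq_sum => r _; rewrite !ffunE muln1; apply: deg_nm.
move=> x y z; under eq_bigr => r _ do rewrite l_eval (big_nth p0) big_mkord.
rewrite bigA_distr_bigA; apply: eq_bigr => ph _.
by rewrite /monom -!big_split /=; apply: eq_bigr => r _; rewrite !ffunE.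
Qed.

Definition tricolored_sum_free (F : zmodType) (Ix D : finType) (S : {set Ix})
    (u v w : Ix -> D -> F) : Prop :=
  (forall a, a \in S -> forall r, u a r + v a r = w a r) /\
  (forall a b c, a \in S -> b \in S -> c \in S ->
     (forall r, u a r + v b r = w c r) -> a = c /\ b = c).

Definition low_deg_exponent (F : finFieldType) (D : finType) :
    pred {ffun D -> 'I_#|F|.-1.+1} :=
  fun al => (3 * exponent_deg al <= #|F|.-1 * #|D|)%N.
Arguments low_deg_exponent : clear implicits.

Lemma card_finField_predS (F : finFieldType) : #|F|.-1.+1 = #|F|.
Proof. exact/prednK/ltnW/card_finNzRing_gt1. Qed.

Lemma one_sub_expf_card_pred (F : finFieldType) (z : F) : 1 - z ^+ #|F|.-1 = (z == 0)%:R.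
Proof.
have [->|z_neq0] := eqVneq z 0.
  by rewrite expr0n eqn0Ngt -ltnS card_finField_predS card_finNzRing_gt1 subr0.
apply/eqP; rewrite subr_eq0 eq_sym -(inj_eq (mulfI z_neq0)) -exprS mulr1.
by rewrite card_finField_predS expf_card.
Qed.

(* The slice-rank bound for tricolored sum-free sets: the tensor
   prod_r (1 - (u_a + v_b - w_c)_r ^ (q-1)) is the diagonal indicator of S, and
   each of its monomials has one of its three exponent vectors of low degree. *)
Lemma tricolored_card_le (F : finFieldType) (Ix D : finType) (S : {set Ix})
    (u v w : Ix -> D -> F) :
  tricolored_sum_free S u v w -> (#|S| <= 3 * #|low_deg_exponent F D|)%N.
Proof.
move=> [S_diag S_off].
set Q := #|F|.-1; set P := low_deg_exponent F D.
have [s [cf [al [be [ga [deg_sum expand]]]]]] := prod_one_sub_expr_expansion F D Q.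
pose T a b c := \prod_r (1 - (u a r + v b r - w c r) ^+ Q).
apply: (@card_le_slice_rank F Ix _ S P T
  (fun al0 a => monom al0 (u a)) (fun be0 b => monom be0 (v b)) (fun ga0 c => monom ga0 (w c))
  (fun al0 b c => \sum_(ph | P (al ph) && (al ph == al0))
                    cf ph * monom (be ph) (v b) * monom (ga ph) (w c))
  (fun be0 a c => \sum_(ph | ~~ P (al ph) && P (be ph) && (be ph == be0))
                    cf ph * monom (al ph) (u a) * monom (ga ph) (w c))
  (fun ga0 a b => \sum_(ph | ~~ P (al ph) && ~~ P (be ph) && (ga ph == ga0))
                    cf ph * monom (al ph) (u a) * monom (be ph) (v b))).
- move=> a aS; apply/prodf_neq0 => r _.
  by rewrite one_sub_expf_card_pred S_diag // subrr eqxx oner_neq0.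
- move=> a b c aS bS cS /prodf_neq0 T_neq0; apply: S_off => // r.
  move: (T_neq0 r isT); rewrite one_sub_expf_card_pred.
  have [/eqP|_] := eqVneq (u a r + v b r - w c r) 0; first by rewrite subr_eq0 => /eqP.
  by rewrite mulr0n eqxx.
- move=> a b c _ _ _; rewrite /T expand (bigID (fun ph => P (al ph))) /=.
  rewrite [X in _ + X](bigID (fun ph => P (be ph))) /= addrA.
  congr (_ + _ + _).
  + rewrite (partition_big al P) //=; apply: eq_bigr => al0 _.
    by rewrite mulr_sumr; apply: eq_bigr => ph /andP [_ /eqP <-]; ring.
  + rewrite (partition_big be P) /= => [|ph /andP []] //.
    apply: eq_bigr => be0 _.
    by rewrite mulr_sumr; apply: eq_bigr => ph /andP [_ /eqP <-]; ring.
  + rewrite (partition_big ga P) /= => [|ph /andP [not_Pal not_Pbe]].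
      apply: eq_bigr => ga0 _.
      by rewrite mulr_sumr; apply: eq_bigr => ph /andP [_ /eqP <-]; ring.
    move: not_Pal not_Pbe (deg_sum ph); rewrite /P /low_deg_exponent /Q -!ltnNge.
    by move: (_ * #|D|)%N => K; lia.
Qed.

Definition tensor_set (Ix : finType) (m : nat) (S : {set Ix}) : {set {ffun 'I_m -> Ix}} :=
  [set ph : {ffun 'I_m -> Ix} | [forall k, ph k \in S]].

Lemma card_tensor_set (Ix : finType) (m : nat) (S : {set Ix}) :
  #|tensor_set m S| = (#|S| ^ m)%N.
Proof.
rewrite -[in RHS](card_ord m) -card_ffun_on; apply: eq_card => ph.
by rewrite inE; apply/forallP/ffun_onP.
Qed.

Lemma tricolored_sum_free_tensor (F : zmodType) (Ix D : finType) (S : {set Ix})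
    (u v w : Ix -> D -> F) (m : nat) :
  tricolored_sum_free S u v w ->
  tricolored_sum_free (tensor_set m S)
    (fun (ph : {ffun 'I_m -> Ix}) (kr : 'I_m * D) => u (ph kr.1) kr.2)
    (fun (ph : {ffun 'I_m -> Ix}) (kr : 'I_m * D) => v (ph kr.1) kr.2)
    (fun (ph : {ffun 'I_m -> Ix}) (kr : 'I_m * D) => w (ph kr.1) kr.2).
Proof.
move=> [S_diag S_off]; split.
  by move=> ph; rewrite inE => /forallP ph_S [k r]; apply: S_diag.
move=> a b c; rewrite !inE => /forallP aS /forallP bS /forallP cS abc.
have abc_k k : a k = c k /\ b k = c k by apply: S_off => // r; apply: (abc (k, r)).
by split; apply/ffunP => k; case: (abc_k k).
Qed.

(** * The bound Gamma_q^n *)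

From mathcomp Require Import all_classical all_reals all_analysis lra.

Lemma card_low_deg_exponent_le (R : realType) (F : finFieldType) (D : finType) (x : R) :
  0 < x < 1 ->
  (#|low_deg_exponent F D|%:R : R) <=
    ((\sum_(l < #|F|) x ^+ l) / powR x ((#|F|.-1)%:R / 3)) ^+ #|D|.
Proof.
move=> /andP [x_gt0 x_lt1]; set Q := #|F|.-1.
have x_pow_gt0 : 0 < powR x (Q%:R / 3 * #|D|%:R) by apply: powR_gt0.
rewrite expr_div_n -[powR _ _ ^+ _]powR_mulrn ?powR_ge0 // -powRrM ler_pdivlMr //.
have -> : (\sum_(l < #|F|) x ^+ l) ^+ #|D| =
          \sum_(al : {ffun D -> 'I_Q.+1}) x ^+ exponent_deg al.
  rewrite -prodr_const -card_finField_predS bigA_distr_bigA.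
  by apply: eq_bigr => al _; rewrite prodrXr.
rewrite -sum1_card natr_sum mulr_suml.
apply: le_trans (_ : \sum_(al | low_deg_exponent F D al) x ^+ exponent_deg al <= _).
  apply: ler_sum => al al_low; rewrite mul1r -powR_mulrn; last exact: ltW.
  apply: ger_powR; first by rewrite x_gt0 (ltW x_lt1).
  move: al_low; rewrite unfold_in /low_deg_exponent /= -(ler_nat R) !natrM => al_low.
  by rewrite mulrAC ler_pdivlMr // mulrC.
rewrite [leRHS](bigID (low_deg_exponent F D)) /= lerDl.
by apply: sumr_ge0 => al _; apply/exprn_ge0/ltW.
Qed.

Lemma GammaE (R : realType) (F : finFieldType) :
  Gamma R #|F| = inf [set (\sum_(l < #|F|) x ^+ l) / powR x ((#|F|.-1)%:R / 3)
                      | x in `]0, 1[]%classic.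
Proof.
rewrite /Gamma /Jfun mulrA mulfV ?mul1r // pnatr_eq0 -lt0n.
exact/ltnW/card_finNzRing_gt1.
Qed.

Lemma ler_expr_inf (R : realType) (E : set R) (M : R) (n : nat) :
  (E !=set0)%classic -> 0 <= M -> (forall r, E r -> 0 <= r /\ M <= r ^+ n) ->
  M <= inf E ^+ n.
Proof.
move=> [r0 Er0] M_ge0; have [-> | n_gt0] := posnP n => E_bound.
  by have [_ M_le] := E_bound r0 Er0; rewrite expr0 in M_le *.
have n_neq0 : n%:R != 0 :> R by rewrite pnatr_eq0 -lt0n.
have rootK : powR M n%:R^-1 ^+ n = M.
  by rewrite -powR_mulrn ?powR_ge0 // -powRrM mulVf ?powRr1.
have root_le : powR M n%:R^-1 <= inf E.
  apply: lb_le_inf; first by exists r0.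
  move=> r /E_bound [r_ge0 M_le].
  have -> : r = powR (r ^+ n) n%:R^-1 by rewrite -powR_mulrn // -powRrM mulfV ?powRr1.
  by apply: ge0_ler_powR; rewrite ?invr_ge0 ?ler0n ?nnegrE ?exprn_ge0.
rewrite -rootK lerXn2r ?nnegrE ?powR_ge0 //; exact: le_trans (powR_ge0 _ _) root_le.
Qed.

Lemma card_low_deg_exponent_le_Gamma (R : realType) (F : finFieldType) (D : finType) :
  (#|low_deg_exponent F D|%:R : R) <= Gamma R #|F| ^+ #|D|.
Proof.
have half_in : (2^-1 : R) \in `]0, 1[ by rewrite in_itv /= invr_gt0 ltr0n invf_lt1 ?ltr1n.
rewrite GammaE; apply: ler_expr_inf; [by eexists; exists 2^-1 | exact: ler0n |].
move=> _ [x x_in <-]; move: x_in; rewrite /= in_itv /= => x_in.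
split; last exact: card_low_deg_exponent_le.
case/andP: x_in => x_gt0 _; apply: divr_ge0; last exact: powR_ge0.
by apply: sumr_ge0 => l _; apply/exprn_ge0/ltW.
Qed.

Lemma Gamma_expr_ge1 (R : realType) (F : finFieldType) (D : finType) :
  1 <= Gamma R #|F| ^+ #|D|.
Proof.
apply: le_trans (card_low_deg_exponent_le_Gamma R F D); rewrite ler1n; apply/card_gt0P.
exists [ffun => ord0].
by rewrite unfold_in /low_deg_exponent /exponent_deg big1 // => r _; rewrite ffunE.
Qed.

Lemma bernoulli_inequality (R : realFieldType) (d : R) (m : nat) : 0 <= d ->
  1 + m%:R * d <= (1 + d) ^+ m.
Proof.
move=> d_ge0; elim: m => [|m IH]; first by rewrite mul0r addr0 expr0.
rewrite exprS mulrSr; apply: le_trans (_ : (1 + d) * (1 + m%:R * d) <= _).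
  have : 0 <= m%:R * d * d by rewrite !mulr_ge0.
  by move: (m%:R : R) => M; lra.
by rewrite ler_pM2l // (lt_le_trans ltr01) // lerDl.
Qed.

Lemma ler_of_expr_le_const (R : archiRealFieldType) (C s g : R) : 0 < g -> 0 <= s ->
  (forall m, s ^+ m <= C * g ^+ m) -> s <= g.
Proof.
move=> g_gt0 s_ge0 s_le; rewrite leNgt; apply/negP => g_lt_s.
have C_ge1 : 1 <= C by have := s_le 0%N; rewrite !expr0 mulr1.
set d := s / g - 1.
have d_gt0 : 0 < d by rewrite subr_gt0 ltr_pdivlMr // mul1r.
pose m := Num.Def.archi_bound (C / d).
have C_lt : C < m%:R * d.
  rewrite -ltr_pdivrMr //; apply: archi_boundP.
  by apply: divr_ge0; [exact: le_trans ler01 C_ge1 | exact: ltW].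
have : C < (s / g) ^+ m.
  rewrite -[s / g](subrK 1) addrC; apply: lt_le_trans (bernoulli_inequality m (ltW d_gt0)).
  by move: C_lt; move: (m%:R * d) => md; lra.
by rewrite expr_div_n ltr_pdivlMr ?exprn_gt0 // ltNge s_le.
Qed.

Lemma tricolored_card_le_Gamma (R : realType) (F : finFieldType) (Ix D : finType)
    (S : {set Ix}) (u v w : Ix -> D -> F) :
  tricolored_sum_free S u v w -> (#|S|%:R : R) <= Gamma R #|F| ^+ #|D|.
Proof.
move=> sum_free; have Gamma_ge1 := Gamma_expr_ge1 R F D.
apply: (@ler_of_expr_le_const _ 3); [exact: lt_le_trans ltr01 Gamma_ge1 | exact: ler0n |].
move=> m; have := card_low_deg_exponent_le_Gamma R F ('I_m * D)%type.
rewrite card_prod card_ord mulnC exprM -natrX -card_tensor_set => card_le.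
apply: le_trans (ler_wpM2l _ card_le) => //.
have := tricolored_card_le (tricolored_sum_free_tensor m sum_free).
by rewrite -(ler_nat R) natrM.
Qed.

(** * Swapping coordinates between solutions *)

Lemma injection_into_set (T : finType) (P : {set T}) (t : nat) : (t <= #|P|)%N ->
  exists p : 'I_t -> T, injective p /\ forall s, p s \in P.
Proof.
move=> t_le; exists (fun s => enum_val (widen_ord t_le s)); split.
  by move=> s s' /enum_val_inj /(congr1 val) /= /val_inj.
by move=> s; apply: enum_valP.
Qed.

Lemma is_solution_swap (F : fieldType) m k n (A : 'M[F]_(m, k))
    (xa xb xc : 'I_k -> 'rV[F]_n) (j1 j2 : 'I_k) (c : F) :
  j1 != j2 -> col j1 A = c *: col j2 A -> is_solution A xc ->
  c *: xa j1 + xb j2 = c *: xc j1 + xc j2 ->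
  is_solution A (fun j => if j == j1 then xa j1 else if j == j2 then xb j2 else xc j).
Proof.
move=> j12 col_j1 xc_sol same_sum r.
have A_j1 : A r j1 = c * A r j2 by have /matrixP/(_ r 0) := col_j1; rewrite !mxE.
have j21 : (j2 == j1) = false by rewrite eq_sym (negbTE j12).
rewrite -[LHS]subr0 -{2}(xc_sol r) -sumrB (bigD1 j1) // (bigD1 j2) ?j21 //=.
rewrite big1 => [|j /andP [ne_j1 ne_j2]]; last first.
  by rewrite (negbTE ne_j1) (negbTE ne_j2) subrr.
rewrite !eqxx addr0 -!scalerBr A_j1 mulrC -scalerA -scalerDr.
by rewrite scalerBr addrACA -opprD same_sum subrr scaler0.
Qed.

Section SwapPairs.

Variables (F : finFieldType) (k n L : nat) (x : 'I_L -> 'I_k -> 'rV[F]_n)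
  (j1 j2 : 'I_k) (c : F).
Hypothesis x_disjoint : forall i i', i != i' -> disjoint_sol (x i) (x i').
Hypothesis c_neq0 : c != 0.

Definition swap_pairs (i : 'I_L) : {set 'I_L * 'I_L} :=
  [set p | [&& p.1 != i, p.2 != i & c *: x p.1 j1 + x p.2 j2 == c *: x i j1 + x i j2]].

Definition swap_firsts (i : 'I_L) : {set 'I_L} := [set p.1 | p in swap_pairs i].

Lemma swap_firsts_irr (i : 'I_L) : i \notin swap_firsts i.
Proof.
apply/imsetP => -[p]; rewrite inE => /and3P [ne_i _ _] eq_i.
by rewrite -eq_i eqxx in ne_i.
Qed.

(* A solution of u_a + v_b = w_i with exactly one of a, b equal to i would make
   two distinct solutions share an entry; one with neither would put a in
   swap_firsts i. *)
Lemma swap_independent_tricolored (I : {set 'I_L}) :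
  (forall a i, a \in I -> i \in I -> a \notin swap_firsts i) ->
  tricolored_sum_free I (fun a r => c * x a j1 0 r) (fun a r => x a j2 0 r)
    (fun a r => c * x a j1 0 r + x a j2 0 r).
Proof.
move=> I_indep; split=> // a b i aI bI iI abi.
have same_sum : c *: x a j1 + x b j2 = c *: x i j1 + x i j2.
  by apply/rowP => r; rewrite !mxE; apply: abi.
have [eq_ai | ne_ai] := eqVneq a i.
  rewrite eq_ai in same_sum *; split=> //; apply/eqP; apply: contraT => ne_bi.
  by have := x_disjoint ne_bi j2 j2; rewrite (addrI _ same_sum) eqxx.
have [eq_bi | ne_bi] := eqVneq b i.
  have := x_disjoint ne_ai j1 j1; rewrite eq_bi in same_sum.
  by rewrite (scalerI c_neq0 (addIr _ same_sum)) eqxx.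
have := I_indep a i aI iI; case/imsetP; exists (a, b) => //.
by rewrite inE /= ne_ai ne_bi same_sum eqxx.
Qed.

Lemma card_le_few_swap_pairs (R : realType) (t : nat) :
  (forall i, #|swap_pairs i| < t)%N ->
  (L%:R : R) <= (2 * t.-1 + 1)%:R * Gamma R #|F| ^+ n.
Proof.
move=> few_pairs.
have firsts_le i : (#|swap_firsts i| <= t.-1)%N.
  by apply: leq_trans (leq_imset_card _ _) _; rewrite -ltnS (ltn_predK (few_pairs i)).
have [I [_ card_I I_indep]] := independent_subset firsts_le swap_firsts_irr [set: 'I_L].
have := tricolored_card_le_Gamma R (swap_independent_tricolored I_indep).
rewrite card_ord => I_le; rewrite cardsT card_ord in card_I.
by apply: le_trans (ler_wpM2l (ler0n _ _) I_le); rewrite -natrM ler_nat.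
Qed.

End SwapPairs.

Theorem corollary6p2 (R : realType) (F : finFieldType) (m k n t L : nat)
  (A : 'M[F]_(m, k)) (x : 'I_L -> 'I_k -> 'rV[F]_n) (j1 j2 : 'I_k) :
  (0 < t)%N ->
  (forall i, is_solution A (x i)) ->
  (forall i i', i != i' -> disjoint_sol (x i) (x i')) ->
  j1 != j2 -> same_col_class A j1 j2 ->
  4 * t%:R * (Gamma R #|F|) ^+ n <= (L%:R : R) ->
  exists (i : 'I_L) (p : 'I_t -> 'I_L * 'I_L),
    injective p /\
    forall s : 'I_t,
      (p s).1 != i /\ (p s).2 != i /\
      is_solution A (fun j => if j == j1 then x (p s).1 j1
                              else if j == j2 then x (p s).2 j2
                              else x i j).
Proof.
move=> t_gt0 x_sol x_disjoint j12 [c [c_neq0 col_j1]] L_ge.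
have [i t_le | no_i] := pickP (fun i => t <= #|swap_pairs x j1 j2 c i|)%N.
  have [p [p_inj p_in]] := injection_into_set t_le.
  exists i, p; split=> // s; have := p_in s; rewrite inE => /and3P [ne1 ne2 /eqP same_sum].
  by do 2!split=> //; apply: is_solution_swap j12 col_j1 (x_sol i) same_sum.
exfalso; have few_pairs i : (#|swap_pairs x j1 j2 c i| < t)%N by rewrite ltnNge no_i.
have := card_le_few_swap_pairs x_disjoint c_neq0 R few_pairs.
have := Gamma_expr_ge1 R F 'I_n; rewrite card_ord.
have t_eq : t%:R = t.-1%:R + 1 :> R by rewrite natr1 prednK.
rewrite t_eq in L_ge; rewrite natrD natrM.
move: L_ge (ler0n R t.-1); move: (t.-1%:R : R) (Gamma R #|F| ^+ n) => T G; nra.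
Qed.
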